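(* Let $A$ be a set and $w\in A^*$ a word. Let $A_w$ be the set consisting of the empty word together with all words in $A^*$ that start with $w$ (i.e. have $w$ as a prefix). Then $A_w$ is a free submonoid of $A^*$ if and only if $w$ is non-overlapping.
   Context: $A^*$ is the free monoid of finite words over $A$ under concatenation; $l(x)$ denotes the length of a word $x$. A word $u$ overlaps with a word $v$ if there exist words $x,y$ with $ux=yv$ and $l(y)<l(u)$. A word $w$ is non-overlapping if it does not overlap with itself. A submonoid of $A^*$ is free if every element has a unique factorization into irreducibles (nonempty elements of the submonoid not expressible as a product of two nonempty elements of the submonoid). *)

From Stdlib Require Import List.
Import ListNotations.

(* u overlaps with v: there are words x, y with u x = y v and 0 < l(y) < l(u).
   (The nonemptiness of y is the intended reading.) *)
Definition overlaps {A : Type} (u v : list A) : Prop :=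
  exists x y : list A, u ++ x = y ++ v /\ 0 < length y /\ length y < length u.

Definition non_overlapping {A : Type} (w : list A) : Prop := ~ overlaps w w.

Definition is_submonoid {A : Type} (S : list A -> Prop) : Prop :=
  S [] /\ (forall x y, S x -> S y -> S (x ++ y)).

Definition irreducible {A : Type} (S : list A -> Prop) (x : list A) : Prop :=
  S x /\ x <> [] /\
  ~ (exists y z, S y /\ S z /\ y <> [] /\ z <> [] /\ x = y ++ z).

Definition free_submonoid {A : Type} (S : list A -> Prop) : Prop :=
  is_submonoid S /\
  forall x, S x ->
    exists! fs : list (list A),
      (forall f, In f fs -> irreducible S f) /\ concat fs = x.

Definition A_w {A : Type} (w : list A) : list A -> Prop :=
  fun x => x = [] \/ exists v, x = w ++ v.

From Stdlib Require Import List Lia Classical.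
Import ListNotations.

(* General part (any subset S of A^* ):
   - every element of S has a factorization into irreducibles, by strong
     induction on the length (splitting any reducible element);
   - if S is a submonoid with the cancellation property
       S v -> S (u v) -> S u,
     factorizations are unique: comparing two factorizations
     f R = g R' with g = f l, cancellation puts l in S, so l must be empty
     since g is irreducible.
   Words: for non-overlapping w, A_w has the cancellation property (a
   failure of it exhibits a nonempty proper border of w, i.e. an overlap),
   hence A_w is free.  Conversely, if w x = y w with 0 < l(y) < l(w), the
   word w y w has the two distinct factorizations w . (y w) and (w y) . w,
   whose factors are irreducible because they are shorter than 2 l(w). *)

Section Factorization.

Variable A : Type.
Variable S : list A -> Prop.

Definition factorization (fs : list (list A)) (x : list A) : Prop :=
  (forall f, In f fs -> irreducible S f) /\ concat fs = x.

(* Existence needs no hypothesis on S: peel off a splitting of any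
   reducible element and recurse on the strictly shorter factors. *)
Lemma factorization_exists (x : list A) :
  S x -> exists fs, factorization fs x.
Proof.
  remember (length x) as n eqn:Hn. assert (Hlen : length x <= n) by lia.
  clear Hn. revert x Hlen. induction n as [|n IH]; intros x Hlen Hx.
  - destruct x; [|simpl in Hlen; lia].
    exists []. split; [intros f []|reflexivity].
  - destruct (classic (x = [])) as [->|Hne].
    { exists []. split; [intros f []|reflexivity]. }
    destruct (classic (exists y z, S y /\ S z /\ y <> [] /\ z <> [] /\ x = y ++ z))
      as [[y [z [Hy [Hz [Hy0 [Hz0 ->]]]]]] | Hirr].
    + rewrite length_app in Hlen.
      destruct y as [|a y]; [congruence|]. destruct z as [|b z]; [congruence|].
      simpl in Hlen.
      destruct (IH (a :: y) ltac:(simpl; lia) Hy) as [fs1 [Hfs1 E1]].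
      destruct (IH (b :: z) ltac:(simpl; lia) Hz) as [fs2 [Hfs2 E2]].
      exists (fs1 ++ fs2). split.
      * intros f Hf. apply in_app_or in Hf. destruct Hf; auto.
      * now rewrite concat_app, E1, E2.
    + exists [x]. split.
      * intros f [<-|[]]. repeat split; assumption.
      * apply app_nil_r.
Qed.

(* Irreducibles are nonempty, so only the empty list factorizes []. *)
Lemma factorization_nil (fs : list (list A)) :
  factorization fs [] -> fs = [].
Proof.
  intros [Hfs E]. destruct fs as [|f fs]; [reflexivity|].
  destruct (Hfs f (or_introl eq_refl)) as [_ [Hf0 _]].
  apply app_eq_nil in E. tauto.
Qed.

Hypothesis S_submonoid : is_submonoid S.

Hypothesis S_cancel : forall u v, S v -> S (u ++ v) -> S u.

Lemma concat_in (fs : list (list A)) :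
  (forall f, In f fs -> S f) -> S (concat fs).
Proof.
  destruct S_submonoid as [S_nil S_app].
  induction fs as [|f fs IH]; intro Hfs; simpl; [exact S_nil|].
  apply S_app; [apply Hfs; now left|apply IH; intros g Hg; apply Hfs; now right].
Qed.

(* An irreducible f cannot be extended to an irreducible f l by a word l
   that cancels against elements of S: l would lie in S and split f l. *)
Lemma irreducible_no_extension (f l r : list A) :
  irreducible S f -> irreducible S (f ++ l) -> S r -> S (l ++ r) -> l = [].
Proof.
  intros [Hf [Hf0 _]] [_ [_ Hsplit]] Hr Hlr.
  destruct (classic (l = [])) as [|Hl0]; [assumption|].
  exfalso. apply Hsplit. exists f, l.
  repeat split; auto. exact (S_cancel l r Hr Hlr).
Qed.

Lemma factorization_head (f g : list A) (fs gs : list (list A)) :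
  factorization (f :: fs) (g ++ concat gs) -> factorization (g :: gs) (g ++ concat gs) ->
  f = g.
Proof.
  intros [Hfs E] [Hgs _]. simpl in E.
  assert (Rf : S (concat fs)) by (apply concat_in; intros h Hh; apply Hfs; now right).
  assert (Rg : S (concat gs)) by (apply concat_in; intros h Hh; apply Hgs; now right).
  assert (If : irreducible S f) by (apply Hfs; now left).
  assert (Ig : irreducible S g) by (apply Hgs; now left).
  destruct (app_eq_app _ _ _ _ E) as [l [[-> El]|[-> El]]].
  - rewrite (irreducible_no_extension g l (concat fs) Ig If Rf ltac:(now rewrite <- El)).
    apply app_nil_r.
  - rewrite (irreducible_no_extension f l (concat gs) If Ig Rg ltac:(now rewrite <- El)).
    symmetry. apply app_nil_r.
Qed.

Lemma factorization_unique (fs gs : list (list A)) (x : list A) :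
  factorization fs x -> factorization gs x -> fs = gs.
Proof.
  revert gs x. induction fs as [|f fs IH]; intros gs x Hfs Hgs.
  - destruct Hfs as [_ <-]. symmetry. now apply factorization_nil.
  - destruct gs as [|g gs].
    + destruct Hgs as [_ <-]. now apply factorization_nil.
    + destruct Hgs as [Hgs Eg]. subst x.
      assert (Efg : f = g) by (apply (factorization_head f g fs gs); [exact Hfs|split; auto]).
      subst g. destruct Hfs as [Hfs Ef]. simpl in Ef. apply app_inv_head in Ef.
      f_equal. apply (IH gs (concat gs)); split; auto.
      * intros h Hh. apply Hfs. now right.
      * intros h Hh. apply Hgs. now right.
Qed.

Theorem free_of_cancel : free_submonoid S.
Proof.
  split; [exact S_submonoid|].
  intros x Hx. destruct (factorization_exists x Hx) as [fs Hfs].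
  exists fs. split; [exact Hfs|].
  intros gs Hgs. exact (factorization_unique fs gs x Hfs Hgs).
Qed.

End Factorization.

Section Words.

Variable A : Type.

Lemma prefix_of_shorter (l a w b : list A) :
  l ++ a = w ++ b -> length l <= length w -> exists l', w = l ++ l'.
Proof.
  intros E Hlen. destruct (app_eq_app _ _ _ _ E) as [m [[Hl _]|[Hw _]]].
  - exists []. rewrite app_nil_r.
    assert (length m = 0) by (rewrite Hl, length_app in Hlen; lia).
    destruct m; [now rewrite app_nil_r in Hl|discriminate].
  - exists m. exact Hw.
Qed.

Lemma border_overlaps (w u l l' : list A) :
  u <> [] -> l <> [] -> w = u ++ l -> w = l ++ l' -> overlaps w w.
Proof.
  intros Hu Hl Hul Hll'. exists l', u. split.
  - rewrite Hul at 1. rewrite <- app_assoc, <- Hll'. reflexivity.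
  - rewrite Hul, length_app.
    destruct u; [congruence|]. destruct l; [congruence|]. simpl. lia.
Qed.

Lemma A_w_submonoid (w : list A) : is_submonoid (A_w w).
Proof.
  split; [now left|].
  intros x y [->|[a ->]] Hy; [exact Hy|].
  right. exists (a ++ y). symmetry; apply app_assoc.
Qed.

(* For non-overlapping w, A_w cancels right factors: if v and u v lie in
   A_w, so does u.  Otherwise u would be a nonempty proper prefix of w and
   the rest of w a nonempty border of w. *)
Lemma A_w_cancel (w : list A) :
  non_overlapping w -> forall u v, A_w w v -> A_w w (u ++ v) -> A_w w u.
Proof.
  intros Hno u v Hv [Huv|[a Huv]].
  { left. apply app_eq_nil in Huv. tauto. }
  destruct (app_eq_app _ _ _ _ Huv) as [l [[Hu _] | [Hw Hv']]].
  { right. now exists l. }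
  destruct (classic (u = [])) as [|Hu0]; [now left|].
  destruct l as [|z l]; [right; exists []; rewrite Hw, !app_nil_r; reflexivity|].
  exfalso. destruct Hv as [->|[b Hb]]; [discriminate|].
  rewrite Hb in Hv'.
  destruct (prefix_of_shorter (z :: l) a w b) as [l' Hl'].
  - now symmetry.
  - rewrite Hw, length_app. lia.
  - apply Hno. exact (border_overlaps w u (z :: l) l' Hu0 ltac:(discriminate) Hw Hl').
Qed.

(* A nonempty element of A_w shorter than 2 l(w) is irreducible, since a
   product of two nonempty elements of A_w has length at least 2 l(w). *)
Lemma A_w_short_irreducible (w x : list A) :
  A_w w x -> x <> [] -> length x < 2 * length w -> irreducible (A_w w) x.
Proof.
  intros Hx Hx0 Hlen. repeat split; [exact Hx|exact Hx0|].
  intros [y [z [[Hy|[a ->]] [[Hz|[b ->]] [Hy0 [Hz0 ->]]]]]]; try congruence.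
  rewrite !length_app in Hlen. lia.
Qed.

(* An overlap w x = y w yields two distinct factorizations of w y w. *)
Lemma overlap_not_free (w x y : list A) :
  w ++ x = y ++ w -> 0 < length y < length w -> ~ free_submonoid (A_w w).
Proof.
  intros E [Hy0 Hyw] [_ Hfree].
  assert (Hne : forall z, w ++ z <> []).
  { intros z Hz. apply app_eq_nil in Hz. destruct Hz as [-> _]. simpl in Hyw. lia. }
  assert (Iw : irreducible (A_w w) w).
  { apply A_w_short_irreducible; [right; exists []; symmetry; apply app_nil_r| |lia].
    rewrite <- (app_nil_r w). apply Hne. }
  assert (Iyw : irreducible (A_w w) (y ++ w)).
  { rewrite <- E. apply A_w_short_irreducible; [right; now exists x|apply Hne|].
    rewrite E, length_app. lia. }
  assert (Iwy : irreducible (A_w w) (w ++ y)).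
  { apply A_w_short_irreducible; [right; now exists y|apply Hne|rewrite length_app; lia]. }
  destruct (Hfree (w ++ y ++ w) ltac:(right; now exists (y ++ w))) as [fs [_ Hu]].
  assert (E1 : fs = [w; y ++ w]).
  { apply Hu. split; [intros f [<-|[<-|[]]]; assumption|simpl; now rewrite app_nil_r]. }
  assert (E2 : fs = [w ++ y; w]).
  { apply Hu. split; [intros f [<-|[<-|[]]]; assumption|].
    simpl. now rewrite app_nil_r, app_assoc. }
  rewrite E1 in E2. injection E2 as Ew _.
  apply (f_equal (@length A)) in Ew. rewrite length_app in Ew. lia.
Qed.

End Words.

Theorem lemma4 (A : Type) (w : list A) :
  free_submonoid (A_w w) <-> non_overlapping w.
Proof.
  split.
  - intros Hfree [x [y [E Hy]]]. exact (overlap_not_free A w x y E Hy Hfree).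
  - intro Hno. apply free_of_cancel.
    + apply A_w_submonoid.
    + exact (A_w_cancel A w Hno).
Qed.
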